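(* For every integer $r\ge1$, $\mathrm{Var}(\mu^{(r)})\ge\frac b4\lambda(r)$.
   Context: Fix an integer $b\ge2$. For $n\in\mathbb{N}$ with base-$b$ digits $n_k$, $s(n):=\sum_kn_k$. For $r,n\in\mathbb{N}$, $\Delta^{(r)}(n):=s(n+r)-s(n)$, and $\mu^{(r)}(d):=\lim_{N\to\infty}\frac1N|\{n<N:\Delta^{(r)}(n)=d\}|$ for $d\in\mathbb{Z}$; these limits exist and $\mu^{(r)}$ is a probability measure on $\mathbb{Z}$ with finite moments; $\mathrm{Var}(\mu^{(r)})$ is its variance. Blocks: write the expansion of $r\ge1$ as the digit string $r_\ell\cdots r_0$, $r_\ell\neq0$. A block is either a maximal run of consecutive $0$ digits (a block of $0$'s), or a maximal run of consecutive digits equal to $b-1$, or (when $b\ge3$) a single digit with value in $\{1,\dots,b-2\}$. $\lambda(r)$ is the number of blocks of $r$ that are not blocks of $0$'s (non-zero blocks). *)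

From Stdlib Require Import Reals ZArith Arith List.
From Coquelicot Require Import Coquelicot.
Open Scope R_scope.

Definition digit (b n k : nat) : nat := (n / b ^ k) mod b.

(* s(n): base-b digit sum.  For b >= 2 all digits of index > n vanish,
   so summing over k = 0..n is the full digit sum. *)
Definition s (b n : nat) : nat :=
  fold_right Nat.add 0%nat (map (digit b n) (seq 0 (S n))).

Definition Delta (b r n : nat) : Z :=
  (Z.of_nat (s b (n + r)) - Z.of_nat (s b n))%Z.

Definition freq (b r : nat) (d : Z) (N : nat) : R :=
  INR (length (filter (fun n => Z.eqb (Delta b r n) d) (seq 0 N))) / INR N.

Definition mu (b r : nat) (d : Z) : R := real (Lim_seq (freq b r d)).

(* Sum over d in Z, enumerated as 0, -1, 1, -2, 2, ... (paired). *)
Definition zterm (f : Z -> R) (k : nat) : R :=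
  f (Z.of_nat k) + f (- Z.of_nat k - 1)%Z.

Definition zsum (f : Z -> R) : R := Series (zterm f).

Definition mean_mu (b r : nat) : R := zsum (fun d => IZR d * mu b r d).

Definition var_mu (b r : nat) : R :=
  zsum (fun d => (IZR d - mean_mu b r) ^ 2 * mu b r d).

(* lambda(r): number of non-zero blocks of the base-b expansion of r.
   Non-zero blocks are (i) maximal runs of digits equal to b-1 -- counted
   by their lowest position k (digit k = b-1 and k = 0 or digit (k-1) <> b-1)
   -- and (ii) single digits with value in {1,...,b-2}.  Positions above the
   leading digit are zero and never counted, so scanning k = 0..r suffices. *)
Definition block_start (b r k : nat) : bool :=
  match k with
  | O => Nat.eqb (digit b r 0) (b - 1)
  | S k' => andb (Nat.eqb (digit b r k) (b - 1)) (negb (Nat.eqb (digit b r k') (b - 1)))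
  end.

Definition mid_digit (b r k : nat) : bool :=
  andb (Nat.leb 1 (digit b r k)) (Nat.leb (digit b r k) (b - 2)).

Definition lambda (b r : nat) : nat :=
  length (filter (fun k => orb (block_start b r k) (mid_digit b r k)) (seq 0 (S r))).

(* Fix K and write M = b^K.  If n + r < M, then Delta r n does not change when n is
   translated by a multiple of M, so the frequency of every value d is within r/M of
   its frequency among the n < M with n + r < M.  On the window [0, M) the mean of
   Delta r is exactly r/M, and for r = b r' + a its mean square P_K satisfies
     P_{K+1}(r) = ((b-a) P_K(r') + a P_K(r'+1)) / b + a(b-a)(1 - 2/b^{K+1}),
   since adding a to the last digit of n carries for exactly a of its b values.
   With b lambda(r) + 1 <= (b-a) lambda(r') + a lambda(r'+1) + 4a(b-a) for a >= 1,
   induction on r gives 4 P_K(r) >= b lambda(r) + 1/2 for large K.  The second moment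
   of mu^(r) about any centre is then at least P_K(r) - (r/M)^2 up to an overflow error
   O(r K^2 / M), which is below 1/8 for large K.  The same recursion bounds P_K(r)
   uniformly in K, which makes the series defining the moment converge. *)

From Pilot Require Import Defs.
From Stdlib Require Import Reals ZArith Arith List.
From Coquelicot Require Import Coquelicot.
From Stdlib Require Import Lia Lra Psatz.
(* [Reals] also exports a [Delta] (the discriminant); re-import to resolve it to ours. *)
Import Defs.
Local Open Scope bool_scope.
Open Scope R_scope.

Section DigitSum.
Local Open Scope nat_scope.
Variable b : nat.
Hypothesis hb : 2 <= b.

Definition digit_sum_upto (n N : nat) : nat := list_sum (map (digit b n) (seq 0 N)).

Lemma digit_sum_upto_S n N :
  digit_sum_upto n (S N) = digit_sum_upto n N + digit b n N.
Proof. unfold digit_sum_upto. rewrite seq_S, map_app, list_sum_app. simpl. lia. Qed.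

Lemma digit_lt_pow n k : n < b ^ k -> digit b n k = 0.
Proof. intros H. unfold digit. rewrite Nat.div_small by lia. apply Nat.Div0.mod_0_l. Qed.

Lemma digit_sum_upto_full n N : n < N -> digit_sum_upto n N = s b n.
Proof.
  intros H. induction H.
  - reflexivity.
  - rewrite digit_sum_upto_S, IHle, digit_lt_pow; [lia|].
    assert (m < b ^ m) by (apply Nat.pow_gt_lin_r; lia). lia.
Qed.

Lemma digit_sum_upto_div n N :
  digit_sum_upto n (S N) = n mod b + digit_sum_upto (n / b) N.
Proof.
  unfold digit_sum_upto. simpl. f_equal.
  - unfold digit. rewrite Nat.pow_0_r, Nat.div_1_r. reflexivity.
  - f_equal. rewrite <- seq_shift, map_map. apply map_ext. intros k.
    unfold digit. rewrite Nat.pow_succ_r', Nat.Div0.div_div. reflexivity.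
Qed.

Lemma s_div_mod n : s b n = n mod b + s b (n / b).
Proof.
  destruct n as [|n'].
  - rewrite Nat.Div0.div_0_l, Nat.Div0.mod_0_l. reflexivity.
  - change (s b (S n')) with (digit_sum_upto (S n') (S (S n'))).
    rewrite digit_sum_upto_div. f_equal. apply digit_sum_upto_full.
    assert (S n' / b < S n') by (apply Nat.div_lt; lia). lia.
Qed.

Lemma s_0 : s b 0 = 0.
Proof. unfold s, digit. simpl. rewrite Nat.Div0.mod_0_l. reflexivity. Qed.

Lemma s_mul_add q t : t < b -> s b (b * q + t) = t + s b q.
Proof.
  intros H. rewrite s_div_mod. f_equal.
  - rewrite Nat.mul_comm, Nat.add_comm, Nat.Div0.mod_add. apply Nat.mod_small; auto.
  - f_equal. rewrite Nat.mul_comm, Nat.div_add_l by lia. rewrite Nat.div_small; lia.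
Qed.

Lemma s_1 : s b 1 = 1.
Proof.
  pose proof (s_mul_add 0 1 ltac:(lia)) as H.
  rewrite Nat.mul_0_r, s_0 in H. exact H.
Qed.

Lemma s_concat K q m : m < b ^ K -> s b (q * b ^ K + m) = s b q + s b m.
Proof.
  revert q m. induction K as [|K IH]; intros q m Hm.
  - simpl in Hm. replace m with 0 by lia.
    rewrite s_0, Nat.pow_0_r, Nat.mul_1_r, !Nat.add_0_r. reflexivity.
  - rewrite (Nat.div_mod m b) by lia.
    assert (Ht : m mod b < b) by (apply Nat.mod_upper_bound; lia).
    assert (Hm1 : m / b < b ^ K).
    { apply Nat.Div0.div_lt_upper_bound. rewrite <- Nat.pow_succ_r'. lia. }
    replace (q * b ^ S K + (b * (m / b) + m mod b))
      with (b * (q * b ^ K + m / b) + m mod b) by (rewrite Nat.pow_succ_r'; lia).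
    rewrite !s_mul_add, IH by auto. lia.
Qed.

Lemma s_succ_le n : s b (S n) <= S (s b n).
Proof.
  induction n as [n IH] using lt_wf_ind.
  rewrite (Nat.div_mod n b) by lia.
  assert (Ht : n mod b < b) by (apply Nat.mod_upper_bound; lia).
  destruct (Nat.eq_dec (n mod b) (b - 1)) as [E|E].
  - replace (S (b * (n / b) + n mod b)) with (b * S (n / b) + 0) by lia.
    rewrite !s_mul_add by lia.
    destruct (Nat.eq_dec n 0) as [->|Z].
    + rewrite Nat.Div0.div_0_l, s_1, s_0. lia.
    + assert (n / b < n) by (apply Nat.div_lt; lia).
      specialize (IH (n / b) H). lia.
  - replace (S (b * (n / b) + n mod b)) with (b * (n / b) + S (n mod b)) by lia.
    rewrite !s_mul_add by lia. lia.
Qed.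

Lemma s_add_le n r : s b (n + r) <= s b n + r.
Proof.
  induction r as [|r IH]; [rewrite Nat.add_0_r; lia|].
  rewrite Nat.add_succ_r. pose proof (s_succ_le (n + r)). lia.
Qed.

Lemma s_le_lt_pow K n : n < b ^ K -> s b n <= (b - 1) * K.
Proof.
  revert n. induction K as [|K IH]; intros n Hn.
  - simpl in Hn. replace n with 0 by lia. rewrite s_0. lia.
  - rewrite s_div_mod. assert (n mod b < b) by (apply Nat.mod_upper_bound; lia).
    assert (Hq : n / b < b ^ K).
    { apply Nat.Div0.div_lt_upper_bound. rewrite <- Nat.pow_succ_r'. lia. }
    specialize (IH _ Hq). nia.
Qed.

End DigitSum.

Section Delta.
Local Open Scope nat_scope.
Variable b : nat.
Hypothesis hb : 2 <= b.

Lemma Delta_mul_add r' a n' j : a < b -> j < b ->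
  Delta b (b * r' + a) (b * n' + j) =
  if j + a <? b then (Z.of_nat a + Delta b r' n')%Z
  else (Z.of_nat a - Z.of_nat b + Delta b (S r') n')%Z.
Proof.
  intros Ha Hj. unfold Delta.
  rewrite (s_mul_add b hb n' j Hj).
  destruct (Nat.ltb_spec (j + a) b) as [H|H].
  - replace (b * n' + j + (b * r' + a)) with (b * (n' + r') + (j + a)) by lia.
    rewrite s_mul_add by auto. lia.
  - replace (b * n' + j + (b * r' + a)) with (b * (n' + S r') + (j + a - b)) by lia.
    rewrite s_mul_add by lia. lia.
Qed.

Lemma Delta_le r n : (Delta b r n <= Z.of_nat r)%Z.
Proof. unfold Delta. pose proof (s_add_le b hb n r). lia. Qed.

Lemma Delta_ge_lt_pow K r n : n < b ^ K -> (- Z.of_nat ((b - 1) * K) <= Delta b r n)%Z.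
Proof. intros H. unfold Delta. pose proof (s_le_lt_pow b hb K n H). lia. Qed.

Lemma Delta_concat K r q m : m + r < b ^ K -> Delta b r (q * b ^ K + m) = Delta b r m.
Proof.
  intros H. unfold Delta.
  replace (q * b ^ K + m + r) with (q * b ^ K + (m + r)) by lia.
  rewrite !(s_concat b hb K) by lia. lia.
Qed.

Lemma Delta_0_r r : Delta b r 0 = Z.of_nat (s b r).
Proof. unfold Delta. rewrite s_0. simpl. lia. Qed.

Lemma Delta_0_l n : Delta b 0 n = 0%Z.
Proof. unfold Delta. rewrite Nat.add_0_r. apply Z.sub_diag. Qed.

End Delta.

Definition count_below (f : nat -> bool) (N : nat) : nat := length (filter f (seq 0 N)).

Lemma count_below_S f N : count_below f (S N) = (count_below f N + if f N then 1 else 0)%nat.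
Proof.
  unfold count_below. rewrite seq_S, filter_app, length_app. simpl. destruct (f N); simpl; lia.
Qed.

Lemma count_below_shift f N :
  count_below f (S N) = ((if f 0%nat then 1 else 0) + count_below (fun k => f (S k)) N)%nat.
Proof.
  induction N as [|N IH]; [unfold count_below; simpl; destruct (f 0%nat); reflexivity|].
  rewrite count_below_S, IH, (count_below_S (fun k => f (S k))). lia.
Qed.

Lemma count_below_ext f g N :
  (forall k, (k < N)%nat -> f k = g k) -> count_below f N = count_below g N.
Proof.
  induction N as [|N IH]; intros H; [reflexivity|].
  rewrite !count_below_S, IH by (intros; apply H; lia). rewrite H by lia. reflexivity.
Qed.

Section Lambda.
Local Open Scope nat_scope.
Variable b : nat.
Hypothesis hb : 2 <= b.

Definition nonzero_block_at (r k : nat) : bool := block_start b r k || mid_digit b r k.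

Lemma nonzero_block_at_lt_pow r k : r < b ^ k -> nonzero_block_at r k = false.
Proof.
  intros H. pose proof (digit_lt_pow b hb r k H) as D.
  assert (N0 : Nat.eqb 0 (b - 1) = false) by (apply Nat.eqb_neq; lia).
  unfold nonzero_block_at, block_start, mid_digit. destruct k; rewrite D, N0; reflexivity.
Qed.

Lemma lambda_count_below r N : r <= N -> count_below (nonzero_block_at r) N = lambda b r.
Proof.
  intros H. change (lambda b r) with (count_below (nonzero_block_at r) (S r)).
  assert (Hpow : forall k, k < b ^ k) by (intros; apply Nat.pow_gt_lin_r; lia).
  induction H.
  - rewrite count_below_S, nonzero_block_at_lt_pow by auto. lia.
  - rewrite count_below_S, IHle, nonzero_block_at_lt_pow. lia.
    pose proof (Hpow m). lia.
Qed.

Lemma digit_mul_add_S r' a k : a < b -> digit b (b * r' + a) (S k) = digit b r' k.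
Proof.
  intros Ha. unfold digit. rewrite Nat.pow_succ_r', <- Nat.Div0.div_div.
  f_equal. f_equal. rewrite Nat.mul_comm, Nat.div_add_l by lia. rewrite Nat.div_small; lia.
Qed.

Lemma digit_0 r : digit b r 0 = r mod b.
Proof. unfold digit. rewrite Nat.pow_0_r, Nat.div_1_r. reflexivity. Qed.

Lemma mul_add_mod r' a : a < b -> (b * r' + a) mod b = a.
Proof. intros Ha. rewrite Nat.mul_comm, Nat.add_comm, Nat.Div0.mod_add, Nat.mod_small; lia. Qed.

Lemma lambda_0 : lambda b 0 = 0.
Proof.
  unfold lambda; simpl. unfold block_start, mid_digit. rewrite digit_0, Nat.Div0.mod_0_l.
  replace (Nat.eqb 0 (b - 1)) with false by (symmetry; apply Nat.eqb_neq; lia). reflexivity.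
Qed.

(* The new lowest digit [a] starts a non-zero block unless [a = 0], or
   [a = b - 1] extends a run of [b - 1]'s at the bottom of [r']. *)
Lemma lambda_mul_add r' a : a < b ->
  lambda b (b * r' + a) + (if (a =? b - 1) && (r' mod b =? b - 1) then 1 else 0) =
  lambda b r' + (if 1 <=? a then 1 else 0).
Proof.
  intros Ha. set (r := b * r' + a).
  destruct (Nat.eq_dec r 0) as [Z|Z].
  { assert (r' = 0 /\ a = 0) as [-> ->] by (unfold r in Z; nia).
    subst r. rewrite Nat.mul_0_r, Nat.add_0_r, lambda_0.
    replace (Nat.eqb 0 (b - 1)) with false by (symmetry; apply Nat.eqb_neq; lia). reflexivity. }
  assert (Hr : count_below (nonzero_block_at r) (S r) =
            (if nonzero_block_at r 0 then 1 else 0) + (if nonzero_block_at r 1 then 1 else 0)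
             + count_below (fun k => nonzero_block_at r' (S k)) (r - 1)).
  { replace (S r) with (S (S (r - 1))) by lia. rewrite !count_below_shift.
    rewrite (count_below_ext (fun k => nonzero_block_at r (S (S k)))
                             (fun k => nonzero_block_at r' (S k))); [lia|].
    intros k _. unfold nonzero_block_at, block_start, mid_digit, r.
    rewrite !digit_mul_add_S by auto. reflexivity. }
  assert (Hr' : count_below (nonzero_block_at r') r =
           (if nonzero_block_at r' 0 then 1 else 0)
            + count_below (fun k => nonzero_block_at r' (S k)) (r - 1)).
  { replace r with (S (r - 1)) at 1 by lia. apply count_below_shift. }
  rewrite <- (lambda_count_below r (S r)), <- (lambda_count_below r' r), Hr, Hr'
    by (unfold r; nia).
  unfold nonzero_block_at, block_start, mid_digit, r.
  rewrite !digit_mul_add_S, !digit_0, !mul_add_mod by auto.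
  destruct (Nat.eqb_spec (r' mod b) (b - 1)), (Nat.eqb_spec a (b - 1)),
    (Nat.leb_spec 1 a), (Nat.leb_spec a (b - 2)),
    (Nat.leb_spec 1 (r' mod b)), (Nat.leb_spec (r' mod b) (b - 2)); simpl; lia.
Qed.

Lemma lambda_1 : lambda b 1 = 1.
Proof.
  pose proof (lambda_mul_add 0 1 ltac:(lia)) as L.
  rewrite Nat.mul_0_r, lambda_0, Nat.Div0.mod_0_l in L.
  replace (Nat.eqb 0 (b - 1)) with false in L by (symmetry; apply Nat.eqb_neq; lia).
  rewrite Bool.andb_false_r in L. simpl in L. lia.
Qed.

Lemma lambda_le_succ r :
  lambda b r <= lambda b (S r) + 1 + (if r mod b =? b - 1 then 1 else 0).
Proof.
  induction r as [r IH] using lt_wf_ind.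
  pose proof (Nat.div_mod r b ltac:(lia)) as Hr.
  set (q := r / b) in *. set (x := r mod b) in *.
  assert (Hx : x < b) by (apply Nat.mod_upper_bound; lia).
  pose proof (lambda_mul_add q x Hx) as L1. rewrite <- Hr in L1.
  destruct (Nat.eqb_spec x (b - 1)) as [E|E].
  - destruct (Nat.eq_dec r 0) as [Z|Z]; [rewrite Z, lambda_0; lia|].
    replace (S r) with (b * S q + 0) by lia.
    pose proof (lambda_mul_add (S q) 0 ltac:(lia)) as L2.
    replace (Nat.eqb 0 (b - 1)) with false in L2 by (symmetry; apply Nat.eqb_neq; lia).
    assert (q < r) by (apply Nat.div_lt; lia).
    specialize (IH q H).
    destruct (Nat.leb_spec 1 x), (Nat.eqb_spec (q mod b) (b - 1)); simpl in L1, L2; lia.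
  - replace (S r) with (b * q + S x) by lia.
    pose proof (lambda_mul_add q (S x) ltac:(lia)) as L2.
    destruct (Nat.leb_spec 1 x), (Nat.eqb_spec (S x) (b - 1)),
      (Nat.eqb_spec (q mod b) (b - 1)); simpl in L1, L2; lia.
Qed.

Lemma lambda_mul_add_bound r' a : 1 <= a -> a < b ->
  b * lambda b (b * r' + a) + 1 <=
  (b - a) * lambda b r' + a * lambda b (S r') + 4 * a * (b - a).
Proof.
  intros H1 H2.
  pose proof (lambda_mul_add r' a H2) as L1. pose proof (lambda_le_succ r') as L2.
  set (l := lambda b (b * r' + a)) in *.
  set (l1 := lambda b r') in *. set (l2 := lambda b (S r')) in *.
  destruct (Nat.le_exists_sub (a + 1) b ltac:(lia)) as [c [Hc _]].
  replace (b - a) with (c + 1) by lia.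
  destruct (Nat.leb_spec 1 a); [|lia].
  destruct (Nat.eqb_spec (r' mod b) (b - 1)), (Nat.eqb_spec a (b - 1)); simpl in L1;
    assert (a * l1 <= a * (l2 + 2)) by (apply Nat.mul_le_mono_l; lia); nia.
Qed.

End Lambda.

Fixpoint rsum (f : nat -> R) (n : nat) : R :=
  match n with O => 0 | S m => rsum f m + f m end.

Lemma rsum_ext f g n : (forall k, (k < n)%nat -> f k = g k) -> rsum f n = rsum g n.
Proof.
  induction n as [|n IH]; intros H; simpl; [reflexivity|].
  rewrite IH, H by (intros; try apply H; lia). reflexivity.
Qed.

Lemma rsum_plus f g n : rsum (fun k => f k + g k) n = rsum f n + rsum g n.
Proof. induction n as [|n IH]; simpl; [lra|]. rewrite IH. lra. Qed.

Lemma rsum_scal c f n : rsum (fun k => c * f k) n = c * rsum f n.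
Proof. induction n as [|n IH]; simpl; [lra|]. rewrite IH. lra. Qed.

Lemma rsum_const c n : rsum (fun _ => c) n = INR n * c.
Proof. induction n as [|n IH]; [simpl; lra|]. cbn [rsum]. rewrite IH, S_INR. lra. Qed.

Lemma rsum_le f g n : (forall k, (k < n)%nat -> f k <= g k) -> rsum f n <= rsum g n.
Proof.
  induction n as [|n IH]; intros H; simpl; [lra|].
  pose proof (H n ltac:(lia)). pose proof (IH ltac:(intros; apply H; lia)). lra.
Qed.

Lemma rsum_nonneg f n : (forall k, (k < n)%nat -> 0 <= f k) -> 0 <= rsum f n.
Proof.
  intros H. replace 0 with (rsum (fun _ => 0) n) at 1 by (rewrite rsum_const; lra).
  apply rsum_le. auto.
Qed.

Lemma rsum_app f m n : rsum f (m + n) = rsum f m + rsum (fun k => f (m + k)%nat) n.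
Proof.
  induction n as [|n IH]; simpl; [rewrite Nat.add_0_r; lra|].
  rewrite Nat.add_succ_r. simpl. rewrite IH. lra.
Qed.

Lemma rsum_mul f M c : rsum f (M * c) = rsum (fun i => rsum (fun j => f (i * c + j)%nat) c) M.
Proof.
  induction M as [|M IH]; simpl; [reflexivity|].
  rewrite <- IH, Nat.add_comm. apply rsum_app.
Qed.

Lemma rsum_le_mono f m n : (m <= n)%nat -> (forall k, 0 <= f k) -> rsum f m <= rsum f n.
Proof.
  intros H Hf. replace n with (m + (n - m))%nat by lia. rewrite rsum_app.
  pose proof (rsum_nonneg (fun k => f (m + k)%nat) (n - m) ltac:(intros; apply Hf)). lra.
Qed.

Lemma rsum_ltb c u v N : (c <= N)%nat ->
  rsum (fun j => if (j <? c)%nat then u else v) N = INR c * u + INR (N - c) * v.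
Proof.
  induction N as [|N IH]; intros H.
  - replace c with 0%nat by lia. simpl. lra.
  - destruct (Nat.eq_dec c (S N)) as [->|E].
    + rewrite Nat.sub_diag, (rsum_ext _ (fun _ => u)), rsum_const; [simpl; lra|].
      intros k Hk. destruct (Nat.ltb_spec k (S N)); [reflexivity|lia].
    + cbn [rsum]. rewrite IH by lia. destruct (Nat.ltb_spec N c); [lia|].
      replace (S N - c)%nat with (S (N - c)) by lia. rewrite S_INR. lra.
Qed.

Lemma rsum_overflow_le M r : rsum (fun m => if (m + r <? M)%nat then 0 else 1) M <= INR r.
Proof.
  assert (E : forall N, rsum (fun m => if (m + r <? M)%nat then 0 else 1) N = INR (N - (M - r))).
  { induction N as [|N IH]; cbn [rsum]; [reflexivity|]. rewrite IH.
    destruct (Nat.ltb_spec (N + r) M).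
    - replace (S N - (M - r))%nat with (N - (M - r))%nat by lia. lra.
    - replace (S N - (M - r))%nat with (S (N - (M - r))) by lia. rewrite S_INR. lra. }
  rewrite E. apply le_INR. lia.
Qed.

Section WindowMoments.
Variable b : nat.
Hypothesis hb : (2 <= b)%nat.

Definition DeltaR (r n : nat) : R := IZR (Delta b r n).
Definition moment1 (K r : nat) : R := rsum (DeltaR r) (b ^ K).
Definition moment2 (K r : nat) : R := rsum (fun n => DeltaR r n ^ 2) (b ^ K).

Lemma DeltaR_mul_add r' a n' j : (a < b)%nat -> (j < b)%nat ->
  DeltaR (b * r' + a) (n' * b + j) =
  if (j <? b - a)%nat then INR a + DeltaR r' n' else INR a - INR b + DeltaR (S r') n'.
Proof.
  intros Ha Hj. unfold DeltaR. rewrite (Nat.mul_comm n' b), Delta_mul_add by auto.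
  destruct (Nat.ltb_spec (j + a) b), (Nat.ltb_spec j (b - a)); try lia.
  - rewrite plus_IZR, <- INR_IZR_INZ. reflexivity.
  - rewrite !plus_IZR, minus_IZR, <- !INR_IZR_INZ. reflexivity.
Qed.

(* Of the [b] values of the last digit of [n], [b - a] produce no carry
   when [a] is added and [a] produce one. *)
Lemma rsum_window_mul_add (g : R -> R) K r' a : (a < b)%nat ->
  rsum (fun n => g (DeltaR (b * r' + a) n)) (b ^ S K) =
  rsum (fun n => INR (b - a) * g (INR a + DeltaR r' n)
                 + INR a * g (INR a - INR b + DeltaR (S r') n)) (b ^ K).
Proof.
  intros Ha. rewrite Nat.pow_succ_r', (Nat.mul_comm b (b ^ K)), rsum_mul.
  apply rsum_ext. intros n _.
  rewrite (rsum_ext _ (fun j => if (j <? b - a)%nat then g (INR a + DeltaR r' n)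
                                else g (INR a - INR b + DeltaR (S r') n))).
  - rewrite rsum_ltb by lia. replace (b - (b - a))%nat with a by lia. lra.
  - intros j Hj. rewrite DeltaR_mul_add by auto. destruct (j <? b - a)%nat; reflexivity.
Qed.

Lemma moment1_mul_add K r' a : (a < b)%nat ->
  moment1 (S K) (b * r' + a) = INR (b - a) * (INR a * INR (b ^ K) + moment1 K r')
     + INR a * ((INR a - INR b) * INR (b ^ K) + moment1 K (S r')).
Proof.
  intros Ha. unfold moment1. rewrite (rsum_window_mul_add (fun x => x)) by auto.
  rewrite rsum_plus, !rsum_scal, !rsum_plus, !rsum_const. ring.
Qed.

Lemma moment2_mul_add K r' a : (a < b)%nat ->
  moment2 (S K) (b * r' + a) =
  INR (b - a) * (INR a ^ 2 * INR (b ^ K) + 2 * INR a * moment1 K r' + moment2 K r')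
  + INR a * ((INR a - INR b) ^ 2 * INR (b ^ K) + 2 * (INR a - INR b) * moment1 K (S r')
             + moment2 K (S r')).
Proof.
  intros Ha. unfold moment2, moment1. rewrite (rsum_window_mul_add (fun x => x ^ 2)) by auto.
  rewrite rsum_plus, !rsum_scal.
  rewrite (rsum_ext (fun n => (INR a + DeltaR r' n) ^ 2)
            (fun n => INR a ^ 2 + (2 * INR a * DeltaR r' n + DeltaR r' n ^ 2))) by (intros; ring).
  rewrite (rsum_ext (fun n => (INR a - INR b + DeltaR (S r') n) ^ 2)
            (fun n => (INR a - INR b) ^ 2
                      + (2 * (INR a - INR b) * DeltaR (S r') n + DeltaR (S r') n ^ 2)))
    by (intros; ring).
  rewrite !rsum_plus, !rsum_scal, !rsum_const. ring.
Qed.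

Lemma moment1_eq K r : (r <= b ^ K)%nat -> moment1 K r = INR r.
Proof.
  revert r. induction K as [|K IH]; intros r Hr.
  - unfold moment1, DeltaR. simpl. rewrite Delta_0_r, <- INR_IZR_INZ by auto.
    simpl in Hr. destruct r as [|[|]]; try lia.
    + rewrite s_0. simpl. lra.
    + rewrite s_1 by auto. simpl. lra.
  - pose proof (Nat.div_mod r b ltac:(lia)) as Hd.
    assert (Ha : (r mod b < b)%nat) by (apply Nat.mod_upper_bound; lia).
    rewrite Nat.pow_succ_r' in Hr.
    rewrite Hd, moment1_mul_add by auto.
    destruct (Nat.eq_dec (r mod b) 0) as [->|Z].
    + rewrite IH by nia. rewrite Nat.sub_0_r, Nat.add_0_r, mult_INR. simpl (INR 0). ring.
    + rewrite !IH by nia. rewrite minus_INR, plus_INR, mult_INR, S_INR by lia. ring.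
Qed.

Definition mean_square (K r : nat) : R := moment2 K r / INR (b ^ K).

Lemma INR_pow_ge_1 K : 1 <= INR (b ^ K).
Proof. apply (le_INR 1), Nat.neq_0_lt_0, Nat.pow_nonzero. lia. Qed.

Lemma INR_pow_pos K : 0 < INR (b ^ K).
Proof. pose proof (INR_pow_ge_1 K). lra. Qed.

Lemma mean_square_nonneg K r : 0 <= mean_square K r.
Proof.
  apply Rdiv_le_0_compat; [|apply INR_pow_pos].
  apply rsum_nonneg. intros. apply pow2_ge_0.
Qed.

Lemma mean_square_0_r K : mean_square K 0 = 0.
Proof.
  unfold mean_square, moment2, DeltaR.
  rewrite (rsum_ext _ (fun _ => 0)), rsum_const; [unfold Rdiv; ring|].
  intros. rewrite Delta_0_l. simpl. ring.
Qed.

Lemma mean_square_mul_add K r' a : (a < b)%nat -> (S r' <= b ^ K)%nat ->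
  mean_square (S K) (b * r' + a) =
  (INR (b - a) * mean_square K r' + INR a * mean_square K (S r')) / INR b
  + INR a * INR (b - a) * (1 - 2 / INR (b ^ S K)).
Proof.
  intros Ha H. unfold mean_square. rewrite moment2_mul_add, !moment1_eq by (auto; lia).
  pose proof (INR_pow_pos K). assert (0 < INR b) by (apply lt_0_INR; lia).
  rewrite Nat.pow_succ_r', mult_INR, minus_INR, S_INR by lia. field. lra.
Qed.

Lemma mean_square_mul K r : mean_square (S K) (b * r) = mean_square K r.
Proof.
  unfold mean_square. pose proof (moment2_mul_add K r 0 ltac:(lia)) as E.
  rewrite Nat.add_0_r in E. rewrite E.
  pose proof (INR_pow_pos K). assert (0 < INR b) by (apply lt_0_INR; lia).
  rewrite Nat.pow_succ_r', mult_INR, Nat.sub_0_r. simpl (INR 0). field. lra.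
Qed.

Lemma mean_square_1 K :
  mean_square (S K) 1 = mean_square K 1 / INR b + INR (b - 1) * (1 - 2 / INR (b ^ S K)).
Proof.
  assert (H1 : (1 <= b ^ K)%nat) by (apply Nat.neq_0_lt_0, Nat.pow_nonzero; lia).
  pose proof (mean_square_mul_add K 0 1 ltac:(lia) H1) as E.
  rewrite Nat.mul_0_r, Nat.add_0_l in E. rewrite E, mean_square_0_r. simpl (INR 1).
  unfold Rdiv. ring.
Qed.

End WindowMoments.

Lemma eventually_of_succ (p : nat -> Prop) : eventually (fun K => p (S K)) -> eventually p.
Proof.
  intros [N HN]. exists (S N). intros [|K] HK; [lia|]. apply HN. lia.
Qed.

Lemma eventually_pow_ge b (hb : (2 <= b)%nat) (A : R) : eventually (fun K => A <= INR (b ^ K)).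
Proof.
  destruct (INR_archimed 1 A ltac:(lra)) as [n Hn]. exists n. intros K HK.
  assert (K < b ^ K)%nat by (apply Nat.pow_gt_lin_r; lia).
  assert (INR n <= INR (b ^ K)) by (apply le_INR; lia). lra.
Qed.

Section MeanSquareAsymptotics.
Variable b : nat.
Hypothesis hb : (2 <= b)%nat.

Lemma INR_b_ge_2 : 2 <= INR b.
Proof. replace 2 with (INR 2) by reflexivity. apply le_INR. exact hb. Qed.

Lemma eventually_window_fits r : eventually (fun K => (r <= b ^ K)%nat).
Proof.
  exists r. intros K HK. assert (K < b ^ K)%nat by (apply Nat.pow_gt_lin_r; lia). lia.
Qed.

Lemma mul_sub_le_sq a : (a < b)%nat -> 0 <= INR a * INR (b - a) <= INR b * INR b.
Proof.
  intros Ha. rewrite minus_INR by lia.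
  assert (INR a <= INR b) by (apply le_INR; lia). pose proof (pos_INR a). nra.
Qed.

Lemma mean_square_1_ge K : 16 <= INR (b ^ S K) -> 4 * mean_square b (S K) 1 >= INR b + 1 / 2.
Proof.
  intros HB. pose proof INR_b_ge_2. rewrite mean_square_1, minus_INR by lia. simpl (INR 1).
  pose proof (mean_square_nonneg b hb K 1).
  assert (0 <= mean_square b K 1 / INR b) by (apply Rdiv_le_0_compat; lra).
  assert (2 / INR (b ^ S K) <= 1 / 8).
  { apply (Rmult_le_reg_r (INR (b ^ S K))); [lra|].
    replace (2 / INR (b ^ S K) * INR (b ^ S K)) with 2 by (field; lra). lra. }
  nra.
Qed.

Lemma mean_square_mul_add_ge K r' a : (1 <= a)%nat -> (a < b)%nat -> (S r' <= b ^ K)%nat ->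
  16 * INR b * INR b <= INR (b ^ S K) ->
  4 * mean_square b K r' >= INR b * INR (lambda b r') ->
  4 * mean_square b K (S r') >= INR b * INR (lambda b (S r')) + 1 / 2 ->
  4 * mean_square b (S K) (b * r' + a) >= INR b * INR (lambda b (b * r' + a)) + 1 / 2.
Proof.
  intros H1 Ha Hfit HB IH1 IH2. pose proof INR_b_ge_2.
  rewrite mean_square_mul_add by auto.
  pose proof (lambda_mul_add_bound b hb r' a H1 Ha) as L.
  apply le_INR in L. rewrite !plus_INR, !mult_INR in L. simpl (INR 1) in L.
  replace (INR 4) with 4 in L by (simpl; lra).
  pose proof (INR_pow_pos b hb (S K)). set (B := INR (b ^ S K)) in *.
  pose proof (mul_sub_le_sq a Ha) as [Hab0 Hab].
  assert (Hsmall : INR a * INR (b - a) * (2 / B) <= 1 / 8).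
  { apply (Rmult_le_reg_r B); [lra|].
    replace (INR a * INR (b - a) * (2 / B) * B) with (2 * (INR a * INR (b - a))) by (field; lra).
    nra. }
  assert (Hmix : 4 * ((INR (b - a) * mean_square b K r' + INR a * mean_square b K (S r')) / INR b)
                 >= INR (b - a) * INR (lambda b r') + INR a * INR (lambda b (S r'))).
  { apply Rle_ge, (Rmult_le_reg_r (INR b)); [lra|].
    replace (4 * ((INR (b - a) * mean_square b K r' + INR a * mean_square b K (S r')) / INR b)
             * INR b)
      with (INR (b - a) * (4 * mean_square b K r') + INR a * (4 * mean_square b K (S r')))
      by (field; lra).
    pose proof (pos_INR a). pose proof (pos_INR (b - a)). nra. }
  nra.
Qed.

Theorem mean_square_eventually_ge r : (1 <= r)%nat ->
  eventually (fun K => 4 * mean_square b K r >= INR b * INR (lambda b r) + 1 / 2).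
Proof.
  pose proof INR_b_ge_2.
  induction r as [r IH] using lt_wf_ind. intros Hr1.
  destruct (Nat.eq_dec r 1) as [->|E1].
  { apply eventually_of_succ.
    apply (filter_imp (fun K => 16 <= INR (b ^ S K))).
    - intros K HK. rewrite lambda_1 by auto. simpl (INR 1). rewrite Rmult_1_r.
      apply mean_square_1_ge. exact HK.
    - destruct (eventually_pow_ge b hb 16) as [N HN]. exists N. intros. apply HN. lia. }
  pose proof (Nat.div_mod r b ltac:(lia)) as Hd.
  set (r' := (r / b)%nat) in *. set (a := (r mod b)%nat) in *.
  assert (Ha : (a < b)%nat) by (apply Nat.mod_upper_bound; lia).
  clearbody r' a.
  destruct (Nat.eq_dec a 0) as [Za|Za].
  - rewrite Za, Nat.add_0_r in Hd.
    assert (Hr' : (1 <= r' < r)%nat) by nia.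
    apply eventually_of_succ.
    destruct (IH r' ltac:(lia) ltac:(lia)) as [N HN]. exists N. intros K HK.
    rewrite Hd, mean_square_mul by auto.
    pose proof (lambda_mul_add b hb r' 0 ltac:(lia)) as L.
    replace (Nat.eqb 0 (b - 1)) with false in L by (symmetry; apply Nat.eqb_neq; lia).
    simpl in L. rewrite !Nat.add_0_r in L. rewrite L. auto.
  - assert (Hr'' : (S r' < r)%nat) by nia.
    assert (IH1 : eventually (fun K => 4 * mean_square b K r' >= INR b * INR (lambda b r'))).
    { destruct (Nat.eq_dec r' 0) as [->|Z].
      - exists 0%nat. intros K _. rewrite mean_square_0_r, lambda_0 by auto. simpl. lra.
      - destruct (IH r' ltac:(lia) ltac:(lia)) as [N HN].
        exists N. intros K HK. specialize (HN K HK). lra. }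
    apply eventually_of_succ. rewrite Hd.
    apply (filter_imp (fun K => (S r' <= b ^ K)%nat
              /\ 16 * INR b * INR b <= INR (b ^ S K)
              /\ 4 * mean_square b K r' >= INR b * INR (lambda b r')
              /\ 4 * mean_square b K (S r') >= INR b * INR (lambda b (S r')) + 1 / 2)).
    + intros K (H1 & H2 & H3 & H4). apply mean_square_mul_add_ge; auto; lia.
    + repeat apply filter_and; auto using eventually_window_fits, IH with arith.
      destruct (eventually_pow_ge b hb (16 * INR b * INR b)) as [N HN].
      exists N. intros. apply HN. lia.
Qed.

Lemma mean_square_1_le K : mean_square b K 1 <= INR b.
Proof.
  pose proof INR_b_ge_2. induction K as [|K IH].
  - unfold mean_square, moment2, DeltaR. simpl.
    rewrite Delta_0_r, s_1 by auto. simpl. lra.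
  - rewrite mean_square_1, minus_INR by lia. simpl (INR 1).
    pose proof (INR_pow_pos b hb (S K)).
    assert (0 <= 2 / INR (b ^ S K)) by (apply Rdiv_le_0_compat; lra).
    assert (mean_square b K 1 / INR b <= 1).
    { apply (Rmult_le_reg_r (INR b)); [lra|].
      replace (mean_square b K 1 / INR b * INR b) with (mean_square b K 1) by (field; lra). lra. }
    nra.
Qed.

Theorem mean_square_eventually_bounded r : exists C, eventually (fun K => mean_square b K r <= C).
Proof.
  pose proof INR_b_ge_2.
  induction r as [r IH] using lt_wf_ind.
  destruct (Nat.eq_dec r 0) as [->|E0].
  { exists 0, 0%nat. intros. rewrite mean_square_0_r by auto. lra. }
  destruct (Nat.eq_dec r 1) as [->|E1].
  { exists (INR b), 0%nat. intros K _. apply mean_square_1_le. }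
  pose proof (Nat.div_mod r b ltac:(lia)) as Hd.
  set (r' := (r / b)%nat) in *. set (a := (r mod b)%nat) in *.
  assert (Ha : (a < b)%nat) by (apply Nat.mod_upper_bound; lia).
  clearbody r' a.
  destruct (IH r' ltac:(nia)) as [C1 HC1].
  destruct (Nat.eq_dec a 0) as [->|Za].
  - exists C1. apply eventually_of_succ.
    rewrite Hd, Nat.add_0_r. destruct HC1 as [N HN]. exists N. intros K HK.
    rewrite mean_square_mul by auto. auto.
  - destruct (IH (S r') ltac:(nia)) as [C2 HC2].
    exists (Rabs C1 + Rabs C2 + INR b * INR b). apply eventually_of_succ. rewrite Hd.
    apply (filter_imp (fun K => (S r' <= b ^ K)%nat
              /\ mean_square b K r' <= C1 /\ mean_square b K (S r') <= C2)).
    + intros K (Hfit & H1 & H2). rewrite mean_square_mul_add by auto.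
      pose proof (mean_square_nonneg b hb K r'). pose proof (mean_square_nonneg b hb K (S r')).
      pose proof (INR_pow_pos b hb (S K)).
      assert (0 <= 2 / INR (b ^ S K)) by (apply Rdiv_le_0_compat; lra).
      pose proof (mul_sub_le_sq a Ha) as [Hab0 Hab].
      assert (Hw : INR (b - a) + INR a = INR b) by (rewrite minus_INR by lia; ring).
      assert ((INR (b - a) * mean_square b K r' + INR a * mean_square b K (S r')) / INR b
              <= Rabs C1 + Rabs C2).
      { apply (Rmult_le_reg_r (INR b)); [lra|].
        replace ((INR (b - a) * mean_square b K r' + INR a * mean_square b K (S r')) / INR b
                 * INR b)
          with (INR (b - a) * mean_square b K r' + INR a * mean_square b K (S r'))
          by (field; lra).
        pose proof (pos_INR a). pose proof (pos_INR (b - a)).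
        pose proof (Rle_abs C1). pose proof (Rle_abs C2). nra. }
      nra.
    + repeat apply filter_and; auto using eventually_window_fits.
Qed.

End MeanSquareAsymptotics.

Lemma is_lim_seq_div_INR (c : R) : is_lim_seq (fun n => c / INR n) 0.
Proof.
  replace (Finite 0) with (Rbar_mult c (Rbar_inv p_infty)) by (simpl; f_equal; ring).
  apply is_lim_seq_scal_l, is_lim_seq_inv; [apply is_lim_seq_INR | discriminate].
Qed.

Definition ind (p : bool) : R := if p then 1 else 0.

Lemma ind_bounds p : 0 <= ind p <= 1.
Proof. unfold ind; destruct p; lra. Qed.

Lemma INR_length_filter p N :
  INR (length (filter p (seq 0 N))) = rsum (fun n => ind (p n)) N.
Proof.
  induction N as [|N IH]; [reflexivity|].
  rewrite seq_S, filter_app, length_app, plus_INR, IH. cbn [rsum].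
  simpl. unfold ind. destruct (p N); simpl; lra.
Qed.

Section Frequencies.
Variable b r : nat.
Hypothesis hb : (2 <= b)%nat.

Definition count (d : Z) (N : nat) : R := rsum (fun n => ind (Z.eqb (Delta b r n) d)) N.

(* Only the [n] with [n + r < b^K] are counted: for those, [Delta r n] is
   invariant under translation by multiples of [b^K]. *)
Definition window_count (K : nat) (d : Z) : R :=
  rsum (fun n => ind (n + r <? b ^ K)%nat * ind (Z.eqb (Delta b r n) d)) (b ^ K).

Definition window_freq (K : nat) (d : Z) : R := window_count K d / INR (b ^ K).

Lemma window_count_bounds K d : 0 <= window_count K d <= INR (b ^ K).
Proof.
  unfold window_count. split.
  - apply rsum_nonneg. intros n _.
    apply Rmult_le_pos; apply ind_bounds.
  - rewrite <- (Rmult_1_r (INR (b ^ K))), <- rsum_const. apply rsum_le. intros n _.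
    pose proof (ind_bounds (n + r <? b ^ K)%nat). pose proof (ind_bounds (Delta b r n =? d)%Z).
    nra.
Qed.

Lemma window_freq_nonneg K d : 0 <= window_freq K d.
Proof.
  apply Rdiv_le_0_compat; [apply window_count_bounds | apply INR_pow_pos; auto].
Qed.

Lemma count_block_bounds K d i :
  window_count K d <= rsum (fun m => ind (Z.eqb (Delta b r (i * b ^ K + m)) d)) (b ^ K)
  <= window_count K d + INR r.
Proof.
  split.
  - apply rsum_le. intros m _. unfold ind.
    destruct (Nat.ltb_spec (m + r) (b ^ K)).
    + rewrite Delta_concat by auto. destruct (Delta b r m =? d)%Z; lra.
    + destruct (Delta b r m =? d)%Z, (Delta b r (i * b ^ K + m) =? d)%Z; lra.
  - eapply Rle_trans; [|apply Rplus_le_compat_l, (rsum_overflow_le (b ^ K) r)].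
    unfold window_count. rewrite <- rsum_plus. apply rsum_le. intros m _. unfold ind.
    destruct (Nat.ltb_spec (m + r) (b ^ K)).
    + rewrite Delta_concat by auto. destruct (Delta b r m =? d)%Z; lra.
    + destruct (Delta b r m =? d)%Z, (Delta b r (i * b ^ K + m) =? d)%Z; lra.
Qed.

Lemma count_le_mono d N1 N2 : (N1 <= N2)%nat -> count d N1 <= count d N2.
Proof. intros. apply rsum_le_mono; auto. intros. apply ind_bounds. Qed.

Lemma count_mul_pow_bounds K d q :
  INR q * window_count K d <= count d (q * b ^ K) <= INR q * (window_count K d + INR r).
Proof.
  unfold count. rewrite rsum_mul, <- !rsum_const.
  split; apply rsum_le; intros i _; apply count_block_bounds.
Qed.

Lemma freq_bounds K d N : (1 <= N)%nat ->
  window_freq K d - INR (b ^ K) / INR N <= freq b r d N <=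
  window_freq K d + INR r / INR (b ^ K) + (INR (b ^ K) + INR r) / INR N.
Proof.
  intros HN. unfold freq. rewrite INR_length_filter. fold (count d N). unfold window_freq.
  set (M := (b ^ K)%nat). assert (HM : (0 < M)%nat) by (apply Nat.neq_0_lt_0, Nat.pow_nonzero; lia).
  set (q := (N / M)%nat).
  pose proof (Nat.div_mod N M ltac:(lia)) as Hd. fold q in Hd.
  assert (Hmod : (N mod M < M)%nat) by (apply Nat.mod_upper_bound; lia).
  assert (Hlo : count d (q * M) <= count d N) by (apply count_le_mono; nia).
  assert (Hhi : count d N <= count d (S q * M)) by (apply count_le_mono; nia).
  pose proof (count_mul_pow_bounds K d q) as [B1 _].
  pose proof (count_mul_pow_bounds K d (S q)) as [_ B2].
  fold M in B1, B2. rewrite S_INR in B2.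
  pose proof (window_count_bounds K d) as [G0 G1]. fold M in G1.
  assert (EN : INR N = INR M * INR q + INR (N mod M))
    by (rewrite Hd at 1; rewrite plus_INR, mult_INR; ring).
  assert (INR (N mod M) < INR M) by (apply lt_INR; auto).
  pose proof (pos_INR (N mod M)). pose proof (pos_INR q). pose proof (pos_INR r).
  assert (0 < INR M) by (apply lt_0_INR; auto).
  assert (0 < INR N) by (apply lt_0_INR; lia).
  set (g := window_count K d) in *. set (c := count d N) in *.
  set (Mr := INR M) in *. set (Nr := INR N) in *.
  split.
  - apply (Rmult_le_reg_r (Mr * Nr)); [nra|].
    replace ((g / Mr - Mr / Nr) * (Mr * Nr)) with (g * Nr - Mr * Mr) by (field; lra).
    replace (c / Nr * (Mr * Nr)) with (c * Mr) by (field; lra).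
    nra.
  - apply (Rmult_le_reg_r (Mr * Nr)); [nra|].
    replace ((g / Mr + INR r / Mr + (Mr + INR r) / Nr) * (Mr * Nr))
      with (g * Nr + INR r * Nr + (Mr + INR r) * Mr) by (field; lra).
    replace (c / Nr * (Mr * Nr)) with (c * Mr) by (field; lra).
    nra.
Qed.

Lemma freq_cauchy d : ex_lim_seq_cauchy (freq b r d).
Proof.
  intros [eps Heps]. simpl.
  destruct (eventually_pow_ge b hb (3 * INR r / eps + 1)) as [K HK].
  specialize (HK K (le_n K)). pose proof (INR_pow_pos b hb K). pose proof (pos_INR r).
  set (Mr := INR (b ^ K)) in *.
  assert (H1 : INR r / Mr < eps / 3).
  { apply (Rmult_lt_reg_r (Mr * 3 / eps)); [apply Rdiv_lt_0_compat; lra|].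
    replace (INR r / Mr * (Mr * 3 / eps)) with (3 * INR r / eps) by (field; lra).
    replace (eps / 3 * (Mr * 3 / eps)) with Mr by (field; lra). lra. }
  destruct (INR_archimed 1 (3 * (Mr + INR r) / eps) ltac:(lra)) as [N0 HN0].
  assert (Htail : forall n, (S N0 <= n)%nat -> (Mr + INR r) / INR n < eps / 3).
  { intros n Hn. assert (Hlt : INR N0 < INR n) by (apply lt_INR; lia).
    assert (0 < INR n) by (pose proof (pos_INR N0); lra).
    apply (Rmult_lt_reg_r (INR n * 3 / eps)); [apply Rdiv_lt_0_compat; lra|].
    replace ((Mr + INR r) / INR n * (INR n * 3 / eps)) with (3 * (Mr + INR r) / eps)
      by (field; lra).
    replace (eps / 3 * (INR n * 3 / eps)) with (INR n) by (field; lra). lra. }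
  exists (S N0). intros n m Hn Hm.
  pose proof (Htail n Hn). pose proof (Htail m Hm).
  pose proof (freq_bounds K d n ltac:(lia)) as [A1 A2].
  pose proof (freq_bounds K d m ltac:(lia)) as [B1 B2]. fold Mr in A1, A2, B1, B2.
  assert (Mr / INR n <= (Mr + INR r) / INR n).
  { apply Rmult_le_compat_r; [left; apply Rinv_0_lt_compat, lt_0_INR; lia | lra]. }
  assert (Mr / INR m <= (Mr + INR r) / INR m).
  { apply Rmult_le_compat_r; [left; apply Rinv_0_lt_compat, lt_0_INR; lia | lra]. }
  apply Rabs_def1; lra.
Qed.

Lemma is_lim_seq_freq d : is_lim_seq (freq b r d) (mu b r d).
Proof.
  pose proof (proj2 (ex_lim_seq_cauchy_corr _) (freq_cauchy d)) as [l Hl].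
  unfold mu. rewrite (is_lim_seq_unique _ _ Hl). exact Hl.
Qed.

Lemma window_freq_le_mu K d : window_freq K d <= mu b r d.
Proof.
  cut (Rbar_le (window_freq K d - 0) (mu b r d)); [simpl; lra|].
  apply (is_lim_seq_le_loc (fun n => window_freq K d - INR (b ^ K) / INR n) (freq b r d)
           (window_freq K d - 0) (mu b r d)).
  - exists 1%nat. intros n Hn. apply freq_bounds. exact Hn.
  - apply is_lim_seq_minus'; [apply is_lim_seq_const | apply is_lim_seq_div_INR].
  - apply is_lim_seq_freq.
Qed.

Lemma mu_le_window_freq K d : mu b r d <= window_freq K d + INR r / INR (b ^ K).
Proof.
  cut (Rbar_le (mu b r d) (window_freq K d + INR r / INR (b ^ K) + 0)); [simpl; lra|].
  apply (is_lim_seq_le_loc (freq b r d)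
           (fun n => window_freq K d + INR r / INR (b ^ K) + (INR (b ^ K) + INR r) / INR n)
           (mu b r d) (window_freq K d + INR r / INR (b ^ K) + 0)).
  - exists 1%nat. intros n Hn. apply freq_bounds. exact Hn.
  - apply is_lim_seq_freq.
  - apply is_lim_seq_plus'; [apply is_lim_seq_const | apply is_lim_seq_div_INR].
Qed.

End Frequencies.

Lemma Series_ge_sum (a : nat -> R) (B : R) :
  (forall k, 0 <= a k) -> (forall W, sum_f_R0 a W <= B) ->
  forall W, sum_f_R0 a W <= Series a.
Proof.
  intros Hpos HB W.
  assert (Hincr : forall n, sum_n a n <= sum_n a (S n)).
  { intros n. rewrite sum_Sn. pose proof (Hpos (S n)). unfold plus. simpl. lra. }
  destruct (ex_finite_lim_seq_incr (sum_n a) B Hincr) as [l Hl].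
  { intros n. rewrite sum_n_Reals. apply HB. }
  unfold Series. rewrite (is_lim_seq_unique _ _ Hl), <- sum_n_Reals. simpl.
  exact (is_lim_seq_incr_compare _ _ Hl Hincr W).
Qed.

Lemma sum_zterm_plus F G W :
  sum_f_R0 (zterm (fun d => F d + G d)) W = sum_f_R0 (zterm F) W + sum_f_R0 (zterm G) W.
Proof. induction W as [|W IH]; simpl; unfold zterm in *; [lra|]. rewrite IH. lra. Qed.

Lemma sum_zterm_scal c F W :
  sum_f_R0 (zterm (fun d => c * F d)) W = c * sum_f_R0 (zterm F) W.
Proof. induction W as [|W IH]; simpl; unfold zterm in *; [lra|]. rewrite IH. lra. Qed.

Lemma sum_zterm_ext F G W :
  (forall d, F d = G d) -> sum_f_R0 (zterm F) W = sum_f_R0 (zterm G) W.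
Proof.
  intros H. induction W as [|W IH]; simpl; unfold zterm in *; rewrite ?IH, !H; reflexivity.
Qed.

Lemma sum_zterm_le F G W :
  (forall d, F d <= G d) -> sum_f_R0 (zterm F) W <= sum_f_R0 (zterm G) W.
Proof.
  intros H. apply sum_Rle. intros n _. unfold zterm.
  pose proof (H (Z.of_nat n)). pose proof (H (- Z.of_nat n - 1)%Z). lra.
Qed.

Lemma sum_zterm_nonneg F W : (forall d, 0 <= F d) -> 0 <= sum_f_R0 (zterm F) W.
Proof.
  intros H. apply cond_pos_sum. intros n. unfold zterm.
  pose proof (H (Z.of_nat n)). pose proof (H (- Z.of_nat n - 1)%Z). lra.
Qed.

(* The integers enumerated by the first [W + 1] terms of [zterm]. *)
Definition in_zwindow (W : nat) (x : Z) : bool :=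
  (- Z.of_nat W - 1 <=? x)%Z && (x <=? Z.of_nat W)%Z.

Lemma sum_zterm_ind x W (g : Z -> R) :
  sum_f_R0 (zterm (fun d => g d * ind (Z.eqb x d))) W = if in_zwindow W x then g x else 0.
Proof.
  unfold in_zwindow, zterm, ind.
  induction W as [|W IH]; simpl sum_f_R0; [|rewrite IH, Nat2Z.inj_succ];
    repeat match goal with
    | |- context [(?u =? ?v)%Z] => destruct (Z.eqb_spec u v)
    | |- context [(?u <=? ?v)%Z] => destruct (Z.leb_spec u v)
    end; simpl; try lia; subst; lra.
Qed.

Lemma sum_zterm_rsum_ind (X : nat -> Z) (w : nat -> R) (g : Z -> R) W M :
  sum_f_R0 (zterm (fun d => g d * rsum (fun n => w n * ind (Z.eqb (X n) d)) M)) W =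
  rsum (fun n => w n * (if in_zwindow W (X n) then g (X n) else 0)) M.
Proof.
  induction M as [|M IH].
  - cbn [rsum]. rewrite (sum_zterm_ext _ (fun d => 0 * 0)) by (intros; ring).
    rewrite sum_zterm_scal. ring.
  - cbn [rsum]. rewrite <- IH, <- sum_zterm_ind, <- sum_zterm_scal, <- sum_zterm_plus.
    apply sum_zterm_ext. intros d. ring.
Qed.

Lemma cube_le_pow2 K : (10 <= K)%nat -> (K ^ 3 <= 2 ^ K)%nat.
Proof.
  intros H. induction H as [|K HK IH]; [simpl; lia|].
  rewrite (Nat.pow_succ_r' 2 K). assert (S K ^ 3 <= 2 * K ^ 3)%nat by (simpl; nia). lia.
Qed.

Lemma eventually_sq_le_pow b (hb : (2 <= b)%nat) (A : R) :
  eventually (fun K => A * (INR K + 1) ^ 2 <= INR (b ^ K)).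
Proof.
  destruct (INR_archimed 1 (4 * A) ltac:(lra)) as [n Hn].
  exists (n + 10)%nat. intros K HK.
  assert (HnK : INR n <= INR K) by (apply le_INR; lia).
  assert (HK10 : 10 <= INR K) by (replace 10 with (INR 10) by (simpl; lra); apply le_INR; lia).
  assert (H3 : INR K ^ 3 <= INR (b ^ K)).
  { rewrite <- pow_INR. apply le_INR. eapply Nat.le_trans; [apply cube_le_pow2; lia|].
    apply Nat.pow_le_mono_l. lia. }
  destruct (Rle_or_lt A 0) as [HA|HA]; [nra|].
  assert (A * (INR K + 1) ^ 2 <= A * (4 * INR K ^ 2)) by (apply Rmult_le_compat_l; nra).
  nra.
Qed.

Section SecondMoment.
Variable b r : nat.
Hypothesis hb : (2 <= b)%nat.
Variable m : R.

Lemma mu_nonneg d : 0 <= mu b r d.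
Proof. eapply Rle_trans; [apply (window_freq_nonneg b r hb 0) | apply window_freq_le_mu; auto]. Qed.

Lemma sum_zterm_window_freq K W :
  sum_f_R0 (zterm (fun d => (IZR d - m) ^ 2 * window_freq b r K d)) W =
  rsum (fun n => ind (n + r <? b ^ K)%nat / INR (b ^ K) *
         (if in_zwindow W (Delta b r n) then (IZR (Delta b r n) - m) ^ 2 else 0)) (b ^ K).
Proof.
  rewrite <- (sum_zterm_rsum_ind (Delta b r) (fun n => ind (n + r <? b ^ K)%nat / INR (b ^ K))
                (fun d => (IZR d - m) ^ 2)).
  apply sum_zterm_ext. intros d. f_equal.
  unfold window_freq, window_count, Rdiv. rewrite Rmult_comm, <- rsum_scal.
  apply rsum_ext. intros. ring.
Qed.

Lemma window_mean_sq_dev K : (r <= b ^ K)%nat ->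
  rsum (fun n => / INR (b ^ K) * (IZR (Delta b r n) - m) ^ 2) (b ^ K) =
  mean_square b K r - 2 * m * INR r / INR (b ^ K) + m ^ 2.
Proof.
  intros H. rewrite rsum_scal.
  rewrite (rsum_ext _ (fun n => DeltaR b r n ^ 2 + ((-2 * m) * DeltaR b r n + m ^ 2)))
    by (intros; unfold DeltaR; ring).
  rewrite !rsum_plus, rsum_scal, rsum_const.
  fold (moment2 b K r). fold (moment1 b K r). rewrite moment1_eq by auto. unfold mean_square.
  pose proof (INR_pow_pos b hb K). field. lra.
Qed.

Lemma sum_zterm_window_freq_le K W : (r <= b ^ K)%nat ->
  sum_f_R0 (zterm (fun d => (IZR d - m) ^ 2 * window_freq b r K d)) W <=
  mean_square b K r - 2 * m * INR r / INR (b ^ K) + m ^ 2.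
Proof.
  intros H. rewrite sum_zterm_window_freq, <- window_mean_sq_dev by auto.
  apply rsum_le. intros n _. pose proof (INR_pow_pos b hb K).
  assert (0 < / INR (b ^ K)) by (apply Rinv_0_lt_compat; lra).
  pose proof (pow2_ge_0 (IZR (Delta b r n) - m)). unfold ind, Rdiv.
  destruct (in_zwindow W (Delta b r n)), (n + r <? b ^ K)%nat; nra.
Qed.

Lemma Delta_dev_sq_le K n : (n < b ^ K)%nat ->
  (IZR (Delta b r n) - m) ^ 2 <= ((INR r + INR b + Rabs m) * (INR K + 1)) ^ 2.
Proof.
  intros Hn. pose proof (Delta_le b hb r n) as Hup.
  pose proof (Delta_ge_lt_pow b hb K r n Hn) as Hlo.
  apply IZR_le in Hup, Hlo. rewrite <- INR_IZR_INZ in Hup.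
  rewrite opp_IZR, <- INR_IZR_INZ, mult_INR, minus_INR in Hlo by lia. simpl (INR 1) in Hlo.
  pose proof (pos_INR K). pose proof (pos_INR r). pose proof (Rabs_pos m).
  pose proof (Rle_abs m). pose proof (Rle_abs (- m)). rewrite Rabs_Ropp in *.
  assert (1 <= INR b) by (replace 1 with (INR 1) by reflexivity; apply le_INR; lia).
  rewrite <- pow2_abs. apply pow_incr. split; [apply Rabs_pos|].
  apply Rabs_le. split; nra.
Qed.

(* The only [n < b^K] missing from the window frequencies are the [r]
   overflowing ones, and all values of [Delta r n] lie in the [zterm]
   window of size [r + (b - 1) K]. *)
Lemma sum_zterm_window_freq_ge K : (r <= b ^ K)%nat ->
  sum_f_R0 (zterm (fun d => (IZR d - m) ^ 2 * window_freq b r K d)) (r + (b - 1) * K) >=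
  mean_square b K r - 2 * m * INR r / INR (b ^ K) + m ^ 2
  - INR r * ((INR r + INR b + Rabs m) * (INR K + 1)) ^ 2 / INR (b ^ K).
Proof.
  intros H. set (Bd := (INR r + INR b + Rabs m) * (INR K + 1)).
  set (overflow := fun n : nat => if (n + r <? b ^ K)%nat then 0 else 1).
  pose proof (INR_pow_pos b hb K). set (M := INR (b ^ K)) in *.
  rewrite sum_zterm_window_freq, <- window_mean_sq_dev by auto. fold M.
  rewrite (rsum_ext _ (fun n => / M * (IZR (Delta b r n) - m) ^ 2
                     + (- / M) * (overflow n * (IZR (Delta b r n) - m) ^ 2))).
  2:{ intros n Hn. assert (Hin : in_zwindow (r + (b - 1) * K) (Delta b r n) = true).
      { unfold in_zwindow.
        pose proof (Delta_le b hb r n). pose proof (Delta_ge_lt_pow b hb K r n Hn).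
        apply andb_true_intro. split; apply Z.leb_le; nia. }
      rewrite Hin. unfold ind, overflow. destruct (n + r <? b ^ K)%nat; field; lra. }
  rewrite rsum_plus, (rsum_scal (- / M)).
  assert (Hover :
    rsum (fun n => overflow n * (IZR (Delta b r n) - m) ^ 2) (b ^ K) <= INR r * Bd ^ 2).
  { eapply Rle_trans; [apply (rsum_le _ (fun n => Bd ^ 2 * overflow n))|].
    - intros n Hn. pose proof (Delta_dev_sq_le K n Hn) as HB. fold Bd in HB.
      pose proof (pow2_ge_0 (IZR (Delta b r n) - m)).
      unfold overflow. destruct (n + r <? b ^ K)%nat; nra.
    - rewrite rsum_scal. pose proof (rsum_overflow_le (b ^ K) r) as HO. fold overflow in HO.
      pose proof (pow2_ge_0 Bd). nra. }
  assert (0 < / M) by (apply Rinv_0_lt_compat; lra).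
  unfold Rdiv. nra.
Qed.

Lemma sum_zterm_second_moment_bounded :
  exists B, forall W, sum_f_R0 (zterm (fun d => (IZR d - m) ^ 2 * mu b r d)) W <= B.
Proof.
  destruct (mean_square_eventually_bounded b hb r) as [C HC].
  exists (C + 2 * Rabs m * INR r + m ^ 2 + 1). intros W.
  set (CW := sum_f_R0 (zterm (fun d => (IZR d - m) ^ 2)) W).
  assert (HCW : 0 <= CW) by (apply sum_zterm_nonneg; intros; apply pow2_ge_0).
  destruct (filter_and _ _ HC (filter_and _ _ (eventually_window_fits b hb r)
              (eventually_pow_ge b hb (INR r * CW + 1)))) as [K HK].
  destruct (HK K (le_n K)) as (HPC & Hfit & HM).
  pose proof (pos_INR r). pose proof (Rabs_pos m). pose proof (INR_pow_ge_1 b hb K).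
  set (M := INR (b ^ K)) in *.
  assert (Hmu : forall d, (IZR d - m) ^ 2 * mu b r d <=
                          (IZR d - m) ^ 2 * window_freq b r K d + INR r / M * (IZR d - m) ^ 2).
  { intros d. pose proof (mu_le_window_freq b r hb K d) as Hd. pose proof (pow2_ge_0 (IZR d - m)).
    fold M in Hd. nra. }
  eapply Rle_trans; [apply (sum_zterm_le _ _ W Hmu)|].
  rewrite sum_zterm_plus, sum_zterm_scal. fold CW.
  pose proof (sum_zterm_window_freq_le K W Hfit) as Hwin. fold M in Hwin.
  assert (INR r / M * CW <= 1).
  { apply (Rmult_le_reg_r M); [lra|].
    replace (INR r / M * CW * M) with (INR r * CW) by (field; lra). lra. }
  assert (- (2 * m * INR r / M) <= 2 * Rabs m * INR r).
  { assert (Hinv : 0 < / M <= 1) by (split; [apply Rinv_0_lt_compat | rewrite <- Rinv_1;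
      apply Rinv_le_contravar]; lra).
    assert (Hq : 0 <= INR r * / M <= INR r) by nra.
    pose proof (Rle_abs (- m)). rewrite Rabs_Ropp in *. unfold Rdiv.
    assert (0 <= (Rabs m + m) * (INR r * / M)) by (apply Rmult_le_pos; lra).
    assert (0 <= Rabs m * (INR r - INR r * / M)) by (apply Rmult_le_pos; lra).
    nra. }
  lra.
Qed.

Lemma sum_zterm_second_moment_ge : (1 <= r)%nat ->
  exists W, INR b / 4 * INR (lambda b r) <=
            sum_f_R0 (zterm (fun d => (IZR d - m) ^ 2 * mu b r d)) W.
Proof.
  intros hr. set (c := INR r + INR b + Rabs m).
  pose proof (pos_INR r). pose proof (Rabs_pos m).
  destruct (filter_and _ _ (mean_square_eventually_ge b hb r hr)
             (filter_and _ _ (eventually_window_fits b hb r)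
               (eventually_sq_le_pow b hb (8 * (INR r ^ 2 + INR r * c ^ 2))))) as [K HK].
  destruct (HK K (le_n K)) as (HP & Hfit & Hgrowth).
  exists (r + (b - 1) * K)%nat.
  eapply Rle_trans; [|apply (sum_zterm_le (fun d => (IZR d - m) ^ 2 * window_freq b r K d))].
  2:{ intros d. apply Rmult_le_compat_l; [apply pow2_ge_0 | apply window_freq_le_mu; auto]. }
  pose proof (sum_zterm_window_freq_ge K Hfit) as Hwin. fold c in Hwin.
  pose proof (INR_pow_ge_1 b hb K) as HM1. set (M := INR (b ^ K)) in *.
  assert (HK1 : 1 <= (INR K + 1) ^ 2) by (pose proof (pos_INR K); nra).
  (* the window variance [mean_square - (r/M)^2] is the smallest second moment *)
  assert (Hcentre : mean_square b K r - 2 * m * INR r / M + m ^ 2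
                    >= mean_square b K r - INR r ^ 2 / M ^ 2).
  { replace (mean_square b K r - 2 * m * INR r / M + m ^ 2)
      with (mean_square b K r - INR r ^ 2 / M ^ 2 + (m - INR r / M) ^ 2) by (field; lra).
    pose proof (pow2_ge_0 (m - INR r / M)). lra. }
  assert (Herr : INR r ^ 2 / M ^ 2 + INR r * (c * (INR K + 1)) ^ 2 / M <= 1 / 8).
  { apply (Rmult_le_reg_r (8 * M ^ 2)); [nra|].
    replace ((INR r ^ 2 / M ^ 2 + INR r * (c * (INR K + 1)) ^ 2 / M) * (8 * M ^ 2))
      with (8 * INR r ^ 2 + 8 * INR r * c ^ 2 * (INR K + 1) ^ 2 * M) by (field; lra).
    assert (1 <= (INR K + 1) ^ 2 * M) by nra.
    assert (8 * INR r ^ 2 <= 8 * INR r ^ 2 * ((INR K + 1) ^ 2 * M))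
      by (pose proof (pow2_ge_0 (INR r)); nra).
    assert (8 * (INR r ^ 2 + INR r * c ^ 2) * (INR K + 1) ^ 2 * M <= M * M)
      by (apply Rmult_le_compat_r; lra).
    nra. }
  lra.
Qed.

Theorem second_moment_ge : (1 <= r)%nat ->
  zsum (fun d => (IZR d - m) ^ 2 * mu b r d) >= INR b / 4 * INR (lambda b r).
Proof.
  intros hr. apply Rle_ge.
  destruct sum_zterm_second_moment_bounded as [B HB].
  destruct (sum_zterm_second_moment_ge hr) as [W HW].
  eapply Rle_trans; [exact HW|]. apply (Series_ge_sum _ B); [|exact HB].
  intros k. unfold zterm.
  pose proof (mu_nonneg (Z.of_nat k)). pose proof (mu_nonneg (- Z.of_nat k - 1)%Z).
  pose proof (pow2_ge_0 (IZR (Z.of_nat k) - m)).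
  pose proof (pow2_ge_0 (IZR (- Z.of_nat k - 1) - m)).
  nra.
Qed.

End SecondMoment.

Theorem mainTheorem16 (b r : nat) (hb : (2 <= b)%nat) (hr : (1 <= r)%nat) :
  var_mu b r >= INR b / 4 * INR (lambda b r).
Proof. exact (second_moment_ge b r hb (mean_mu b r) hr). Qed.
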